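(* Let $\mathcal C,\mathcal D$ be parsummable categories and $F\colon\mathcal C\to\mathcal D$ a functor of underlying categories that preserves sums. Then: (1) $I\colon\mathcal C\to F_*\mathcal C$ is a morphism of parsummable categories; (2) if $F$ is essentially surjective, then $\hat F\colon F_*\mathcal C\to\mathcal D$ is an equivalence of categories; (3) as ordinary functors, $F=\hat F\circ I$.
   Context: Let $\omega=\{1,2,\dots\}$, $\mathcal M$ the monoid of injections $\omega\to\omega$, $E\mathcal M$ the category with objects $\mathcal M$ and unique morphisms between any two objects. An $E\mathcal M$-category is a small category with a strict $E\mathcal M$-action ($u_*$ the action of $u$, $u^X_\circ\colon X\to u_*X$ the isomorphism from $1\to u$); $\mathrm{supp}(X)$ is the intersection of finite $A\subset\omega$ with $u_*X=X$ for all $u$ fixing $A$ pointwise; tame means all supports finite. A parsummable category is a tame $E\mathcal M$-category with an object $0$ of empty support and a functor $+$ on the full subcategory $\mathcal C\boxtimes\mathcal C$ of disjointly supported pairs, strictly unital, associative, commutative and $E\mathcal M$-equivariant. A morphism of parsummable categories is a strictly $E\mathcal M$-equivariant functor preserving $0$ and $+$ strictly. A functor $F\colon\mathcal C\to\mathcal D$ of underlying categories preserves sums if $F(0)=0$, $F\times F$ maps $\mathcal C\boxtimes\mathcal C$ into $\mathcal D\boxtimes\mathcal D$, and $F$ commutes with $+$ on objects and morphisms. $F_*\mathcal C$ is the parsummable category whose objects are those of $\mathcal C$, with $\mathrm{Hom}_{F_*\mathcal C}(X,Y)=\mathrm{Hom}_{\mathcal D}(FX,FY)$, $\mathcal M$-action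 on objects as in $\mathcal C$, structure isomorphisms $u^X_\circ$ given by $F(u^X_\circ)$, sum of objects as in $\mathcal C$ and sum of morphisms as in $\mathcal D$. $I\colon\mathcal C\to F_*\mathcal C$ is the identity on objects and sends $f\colon X\to Y$ to $F(f)$. $\hat F\colon F_*\mathcal C\to\mathcal D$ is $F$ on objects and the identity on hom-sets. *)

From Stdlib Require Import List.



(* ---------- the monoid M of injections omega -> omega ----------
   omega = {1,2,...} is encoded as nat via n |-> n-1 (a harmless relabelling). *)
Record Inj := { ifun :> nat -> nat; ifun_inj : forall a b, ifun a = ifun b -> a = b }.

Definition inj_id : Inj := {| ifun := fun n => n; ifun_inj := fun a b e => e |}.

Definition inj_comp (u v : Inj) : Inj :=
  {| ifun := fun n => u (v n);
     ifun_inj := fun a b e => @ifun_inj v a b (@ifun_inj u (v a) (v b) e) |}.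

Record Cat := {
  Ob : Type;
  Hom : Ob -> Ob -> Type;
  idm : forall X, Hom X X;
  comp : forall X Y Z, Hom Y Z -> Hom X Y -> Hom X Z }.
Arguments Hom : clear implicits.
Arguments idm {c} X.
Arguments comp {c X Y Z} g f.

Definition is_category (C : Cat) : Prop :=
  (forall X Y (f : Hom C X Y), comp (idm Y) f = f) /\
  (forall X Y (f : Hom C X Y), comp f (idm X) = f) /\
  (forall W X Y Z (h : Hom C Y Z) (g : Hom C X Y) (f : Hom C W X),
      comp h (comp g f) = comp (comp h g) f).

Definition is_iso {C : Cat} {X Y : Ob C} (f : Hom C X Y) : Prop :=
  exists g : Hom C Y X, comp g f = idm X /\ comp f g = idm Y.

Definition cast {C : Cat} {X X' Y Y' : Ob C} (e1 : X = X') (e2 : Y = Y')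
  (f : Hom C X Y) : Hom C X' Y' :=
  match e1 in _ = X1 return Hom C X1 Y' with
  | eq_refl => match e2 in _ = Y1 return Hom C X Y1 with eq_refl => f end
  end.

Record Functor (C D : Cat) := {
  fob : Ob C -> Ob D;
  fhom : forall X Y, Hom C X Y -> Hom D (fob X) (fob Y) }.
Arguments fob {C D} f X.
Arguments fhom {C D} f {X Y} g.

Definition is_functor {C D : Cat} (F : Functor C D) : Prop :=
  (forall X, fhom F (idm X) = idm (fob F X)) /\
  (forall X Y Z (g : Hom C Y Z) (f : Hom C X Y),
      fhom F (comp g f) = comp (fhom F g) (fhom F f)).

Definition fcomp {C D E : Cat} (G : Functor D E) (F : Functor C D) : Functor C E :=
  {| fob := fun X => fob G (fob F X);
     fhom := fun X Y f => fhom G (fhom F f) |}.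

Definition id_functor (C : Cat) : Functor C C :=
  {| fob := fun X => X; fhom := fun X Y f => f |}.

Definition nat_iso {C D : Cat} (F G : Functor C D) : Prop :=
  exists eta : forall X, Hom D (fob F X) (fob G X),
    (forall X, is_iso (eta X)) /\
    (forall X Y (f : Hom C X Y), comp (eta Y) (fhom F f) = comp (fhom G f) (eta X)).

Definition is_equivalence {C D : Cat} (F : Functor C D) : Prop :=
  is_functor F /\
  exists G : Functor D C, is_functor G /\
    nat_iso (fcomp G F) (id_functor C) /\ nat_iso (fcomp F G) (id_functor D).

Definition ess_surj {C D : Cat} (F : Functor C D) : Prop :=
  forall Y : Ob D, exists X (f : Hom D (fob F X) Y), is_iso f.

(* ---------- EM-categories ----------
   A strict EM-action is encoded by the M-action on objects (u_* X = act u X)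
   together with the structure isomorphisms u_o^X = circ u X : X -> u_* X
   (image of the unique morphism 1 -> u); the action on an arbitrary morphism
   (u -> v, f : X -> Y) is then  circ v Y o f o (circ u X)^{-1}. *)
Record EMCat := {
  ecat :> Cat;
  act : Inj -> Ob ecat -> Ob ecat;
  circ : forall u X, Hom ecat X (act u X) }.

Arguments act : clear implicits.
Arguments circ : clear implicits.

Definition is_EM (C : EMCat) : Prop :=
  (forall X, act C inj_id X = X) /\
  (forall u v X, act C u (act C v X) = act C (inj_comp u v) X) /\
  (forall u X, is_iso (circ C u X)) /\
  (forall X (e : act C inj_id X = X), cast eq_refl e (circ C inj_id X) = idm X) /\
  (forall u v X (e : act C u (act C v X) = act C (inj_comp u v) X),
      circ C (inj_comp u v) X = cast eq_refl e (comp (circ C u (act C v X)) (circ C v X))).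

Definition supports (C : EMCat) (A : list nat) (X : Ob C) : Prop :=
  forall u : Inj, (forall a, In a A -> u a = a) -> act C u X = X.

Definition in_supp (C : EMCat) (X : Ob C) (n : nat) : Prop :=
  forall A : list nat, supports C A X -> In n A.

Definition tame (C : EMCat) : Prop :=
  forall X : Ob C, exists s : list nat, forall n, in_supp C X n -> In n s.

Definition disj (C : EMCat) (X Y : Ob C) : Prop :=
  forall n, in_supp C X n -> in_supp C Y n -> False.

(* ---------- parsummable categories ----------
   The sum on objects is a total function whose values are only constrained on
   disjointly supported pairs; the sum of morphisms requires disjointness proofs
   (it is a functor on the full subcategory C [x] C of disjointly supported pairs). *)
Record PCat := {
  pem :> EMCat;
  zero : Ob pem;
  add : Ob pem -> Ob pem -> Ob pem;
  addh : forall X Y X' Y', disj pem X Y -> disj pem X' Y' ->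
         Hom pem X X' -> Hom pem Y Y' -> Hom pem (add X Y) (add X' Y') }.
Arguments zero {p}.
Arguments add {p} X Y.
Arguments addh {p X Y X' Y'} d d' f g.

Definition is_parsummable (C : PCat) : Prop :=
  is_category C /\ is_EM C /\ tame C /\
  (forall n, ~ in_supp C zero n) /\
  (forall X Y (d : disj C X Y), addh d d (idm X) (idm Y) = idm (add X Y)) /\
  (forall X Y X' Y' X'' Y'' (d : disj C X Y) (d' : disj C X' Y') (d'' : disj C X'' Y'')
     (f : Hom C X X') (f' : Hom C X' X'') (g : Hom C Y Y') (g' : Hom C Y' Y''),
      addh d d'' (comp f' f) (comp g' g) = comp (addh d' d'' f' g') (addh d d' f g)) /\
  (forall X, disj C X zero -> add X zero = X) /\
  (forall X, disj C zero X -> add zero X = X) /\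
  (forall X X' (d : disj C X zero) (d' : disj C X' zero) (f : Hom C X X')
     (e1 : add X zero = X) (e2 : add X' zero = X'),
      cast e1 e2 (addh d d' f (idm zero)) = f) /\
  (forall X X' (d : disj C zero X) (d' : disj C zero X') (f : Hom C X X')
     (e1 : add zero X = X) (e2 : add zero X' = X'),
      cast e1 e2 (addh d d' (idm zero) f) = f) /\
  (forall X Y Z, disj C X Y -> disj C Y Z -> disj C X Z ->
      add (add X Y) Z = add X (add Y Z)) /\
  (forall X Y Z X' Y' Z'
     (dXY : disj C X Y) (dYZ : disj C Y Z) (dXZ : disj C X Z)
     (dXY' : disj C X' Y') (dYZ' : disj C Y' Z') (dXZ' : disj C X' Z')
     (d1 : disj C (add X Y) Z) (d1' : disj C (add X' Y') Z')
     (d2 : disj C X (add Y Z)) (d2' : disj C X' (add Y' Z'))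
     (f : Hom C X X') (g : Hom C Y Y') (h : Hom C Z Z')
     (e1 : add (add X Y) Z = add X (add Y Z)) (e2 : add (add X' Y') Z' = add X' (add Y' Z')),
      cast e1 e2 (addh d1 d1' (addh dXY dXY' f g) h) = addh d2 d2' f (addh dYZ dYZ' g h)) /\
  (forall X Y, disj C X Y -> add X Y = add Y X) /\
  (forall X Y X' Y' (d : disj C X Y) (d' : disj C X' Y') (r : disj C Y X) (r' : disj C Y' X')
     (f : Hom C X X') (g : Hom C Y Y') (e1 : add X Y = add Y X) (e2 : add X' Y' = add Y' X'),
      cast e1 e2 (addh d d' f g) = addh r r' g f) /\
  (forall u X Y, disj C X Y -> act C u (add X Y) = add (act C u X) (act C u Y)) /\
  (forall u X Y (d : disj C X Y) (du : disj C (act C u X) (act C u Y))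
     (e : act C u (add X Y) = add (act C u X) (act C u Y)),
      cast eq_refl e (circ C u (add X Y)) = addh d du (circ C u X) (circ C u Y)).

Definition is_pmorphism {C D : PCat} (G : Functor C D) : Prop :=
  is_functor G /\
  (forall u X, fob G (act C u X) = act D u (fob G X)) /\
  (forall u X (e : fob G (act C u X) = act D u (fob G X)),
      cast eq_refl e (fhom G (circ C u X)) = circ D u (fob G X)) /\
  fob G zero = zero /\
  (forall X Y, disj C X Y -> disj D (fob G X) (fob G Y)) /\
  (forall X Y, disj C X Y -> fob G (add X Y) = add (fob G X) (fob G Y)) /\
  (forall X Y X' Y' (d : disj C X Y) (d' : disj C X' Y')
     (dG : disj D (fob G X) (fob G Y)) (dG' : disj D (fob G X') (fob G Y'))
     (f : Hom C X X') (g : Hom C Y Y')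
     (e1 : fob G (add X Y) = add (fob G X) (fob G Y))
     (e2 : fob G (add X' Y') = add (fob G X') (fob G Y')),
      cast e1 e2 (fhom G (addh d d' f g)) = addh dG dG' (fhom G f) (fhom G g)).

Record preserves_sums {C D : PCat} (F : Functor C D) : Prop := {
  ps_zero : fob F zero = zero;
  ps_disj : forall X Y, disj C X Y -> disj D (fob F X) (fob F Y);
  ps_add : forall X Y, disj C X Y -> fob F (add X Y) = add (fob F X) (fob F Y);
  ps_addh : forall X Y X' Y' (d : disj C X Y) (d' : disj C X' Y')
     (f : Hom C X X') (g : Hom C Y Y')
     (e1 : fob F (add X Y) = add (fob F X) (fob F Y))
     (e2 : fob F (add X' Y') = add (fob F X') (fob F Y')),
      cast e1 e2 (fhom F (addh d d' f g)) = addh (ps_disj _ _ d) (ps_disj _ _ d') (fhom F f) (fhom F g) }.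

Section Fstar.
Variables (C D : PCat) (F : Functor C D) (HS : preserves_sums F).

Definition FstarCat : Cat :=
  {| Ob := Ob C;
     Hom := fun X Y => Hom D (fob F X) (fob F Y);
     idm := fun X => idm (fob F X);
     comp := fun X Y Z g f => comp g f |}.

Definition FstarEM : EMCat :=
  {| ecat := FstarCat;
     act := act C;
     circ := fun u X => fhom F (circ C u X) |}.

Definition FstarC : PCat :=
  {| pem := FstarEM;
     zero := @zero C;
     add := @add C;
     addh := fun X Y X' Y' (d : disj C X Y) (d' : disj C X' Y') f g =>
       cast (eq_sym (ps_add _ HS _ _ d)) (eq_sym (ps_add _ HS _ _ d'))
            (addh (ps_disj _ HS _ _ d) (ps_disj _ HS _ _ d') f g) |}.

Definition Ifun : Functor C FstarC :=
  @Build_Functor C FstarC (fun X : Ob C => (X : Ob FstarC))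
    (fun X Y (f : Hom C X Y) => (fhom F f : Hom FstarC X Y)).

Definition Fhat : Functor FstarC D :=
  @Build_Functor FstarC D (fun X : Ob FstarC => fob F X)
    (fun X Y (f : Hom FstarC X Y) => (f : Hom D (fob F X) (fob F Y))).
End Fstar.

Arguments FstarCat {C D} F.
Arguments FstarEM {C D} F.
Arguments FstarC {C D F} HS.
Arguments Ifun {C D F} HS.
Arguments Fhat {C D F} HS.

(* F_* C keeps the objects, the M-action on objects and the sum of objects of C, and takes
   all morphisms from D through F.  Hence every law of F_* C is either literally a law of C
   (on objects) or a law of D transported along F, which preserves sums; I is strict by
   construction; Fhat is the identity on hom-sets, so it is an equivalence as soon as it is
   essentially surjective; and F = Fhat o I holds by definition. *)

From Stdlib Require Import ProofIrrelevance ClassicalEpsilon.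

(* A morphism packed together with its endpoints: two morphisms between propositionally
   equal objects can then be compared without stating the transport explicitly. *)
Definition arr {C : Cat} {A B : Ob C} (f : Hom C A B) :
  {A : Ob C & {B : Ob C & Hom C A B}} := existT _ A (existT _ B f).

Lemma arr_cast {C : Cat} {A A' B B' : Ob C} (p : A = A') (q : B = B') (f : Hom C A B) :
  arr (cast p q f) = arr f.
Proof. destruct p, q; reflexivity. Qed.

Lemma cast_eq_of_arr {C : Cat} {A A' B B' : Ob C} (p : A = A') (q : B = B')
  (f : Hom C A B) (g : Hom C A' B') : arr f = arr g -> cast p q f = g.
Proof.
  destruct p, q; unfold arr; intro H.
  apply inj_pair2 in H; apply inj_pair2 in H; exact H.
Qed.

Lemma arr_eq_cast {C : Cat} {A A' B B' : Ob C} (f : Hom C A B) (g : Hom C A' B') :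
  arr f = arr g -> exists (p : A = A') (q : B = B'), cast p q f = g.
Proof.
  intro H; inversion H; subst.
  exists eq_refl, eq_refl.
  apply (cast_eq_of_arr eq_refl eq_refl), H.
Qed.

Lemma idm_cast {C : Cat} {A A' : Ob C} (p : A = A') : cast p p (idm A) = idm A'.
Proof. destruct p; reflexivity. Qed.

Lemma comp_cast {C : Cat} {A A' B B' E E' : Ob C} (p : A = A') (q q' : B = B') (r : E = E')
  (g : Hom C B E) (f : Hom C A B) :
  comp (cast q r g) (cast p q' f) = cast p r (comp g f).
Proof. rewrite (proof_irrelevance _ q' q); destruct p, q, r; reflexivity. Qed.

Lemma arr_fhom {C D : Cat} (F : Functor C D) {X X' Y Y' : Ob C}
  (f : Hom C X Y) (g : Hom C X' Y') : arr f = arr g -> arr (fhom F f) = arr (fhom F g).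
Proof.
  intro H; destruct (arr_eq_cast _ _ H) as (p & q & <-).
  destruct p, q; reflexivity.
Qed.

Lemma fhom_iso {C D : Cat} (F : Functor C D) (HF : is_functor F) {X Y : Ob C}
  (f : Hom C X Y) : is_iso f -> is_iso (fhom F f).
Proof.
  destruct HF as [Fid Fcomp]; intros (g & gf & fg).
  exists (fhom F g).
  rewrite <- !Fcomp, gf, fg, !Fid; split; reflexivity.
Qed.

Lemma ess_surj_choice {C D : Cat} (F : Functor C D) : ess_surj F ->
  exists (G : Ob D -> Ob C) (eps : forall Y, Hom D (fob F (G Y)) Y)
         (eps_inv : forall Y, Hom D Y (fob F (G Y))),
    (forall Y, comp (eps_inv Y) (eps Y) = idm (fob F (G Y))) /\
    (forall Y, comp (eps Y) (eps_inv Y) = idm Y).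
Proof.
  intro ES.
  assert (iso_over : forall Y, {X : Ob C & {f : Hom D (fob F X) Y &
            {g : Hom D Y (fob F X) | comp g f = idm (fob F X) /\ comp f g = idm Y}}}).
  { intro Y.
    destruct (constructive_indefinite_description _ (ES Y)) as [X HX].
    destruct (constructive_indefinite_description _ HX) as [f Hf].
    destruct (constructive_indefinite_description _ Hf) as [g Hg].
    exists X, f, g; exact Hg. }
  exists (fun Y => projT1 (iso_over Y)), (fun Y => projT1 (projT2 (iso_over Y))),
         (fun Y => proj1_sig (projT2 (projT2 (iso_over Y)))).
  split; intro Y; apply (proj2_sig (projT2 (projT2 (iso_over Y)))).
Qed.

Lemma arr_addh {P : PCat} {A B A' B' A2 B2 A2' B2' : Ob P}
  (d : disj P A B) (d' : disj P A' B') (d2 : disj P A2 B2) (d2' : disj P A2' B2')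
  (f : Hom P A A') (g : Hom P B B') (f2 : Hom P A2 A2') (g2 : Hom P B2 B2') :
  arr f = arr f2 -> arr g = arr g2 -> arr (addh d d' f g) = arr (addh d2 d2' f2 g2).
Proof.
  intros Hf Hg.
  destruct (arr_eq_cast _ _ Hf) as (p & q & <-), (arr_eq_cast _ _ Hg) as (r & s & <-).
  destruct p, q, r, s; simpl.
  rewrite (proof_irrelevance _ d2 d), (proof_irrelevance _ d2' d'); reflexivity.
Qed.

Section ParsummableLaws.
Variables (P : PCat) (HP : is_parsummable P).

Lemma arr_addh_unit_r {A A' Z : Ob P} (hZ : Z = zero)
  (d : disj P A Z) (d' : disj P A' Z) (f : Hom P A A') :
  arr (addh d d' f (idm Z)) = arr f.
Proof.
  subst; destruct HP as (_ & _ & _ & _ & _ & _ & unit_r & _ & unit_r_hom & _).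
  rewrite <- (arr_cast (unit_r A d) (unit_r A' d')), unit_r_hom; reflexivity.
Qed.

Lemma arr_addh_unit_l {A A' Z : Ob P} (hZ : Z = zero)
  (d : disj P Z A) (d' : disj P Z A') (f : Hom P A A') :
  arr (addh d d' (idm Z) f) = arr f.
Proof.
  subst; destruct HP as (_ & _ & _ & _ & _ & _ & _ & unit_l & _ & unit_l_hom & _).
  rewrite <- (arr_cast (unit_l A d) (unit_l A' d')), unit_l_hom; reflexivity.
Qed.

Lemma arr_addh_assoc (X Y Z X' Y' Z' : Ob P)
  (dXY : disj P X Y) (dYZ : disj P Y Z) (dXZ : disj P X Z)
  (dXY' : disj P X' Y') (dYZ' : disj P Y' Z') (dXZ' : disj P X' Z')
  (d1 : disj P (add X Y) Z) (d1' : disj P (add X' Y') Z')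
  (d2 : disj P X (add Y Z)) (d2' : disj P X' (add Y' Z'))
  (f : Hom P X X') (g : Hom P Y Y') (h : Hom P Z Z') :
  arr (addh d1 d1' (addh dXY dXY' f g) h) = arr (addh d2 d2' f (addh dYZ dYZ' g h)).
Proof.
  destruct HP as (_ & _ & _ & _ & _ & _ & _ & _ & _ & _ & assoc & assoc_hom & _).
  rewrite <- (arr_cast (assoc X Y Z dXY dYZ dXZ) (assoc X' Y' Z' dXY' dYZ' dXZ')).
  rewrite (assoc_hom X Y Z X' Y' Z' dXY dYZ dXZ dXY' dYZ' dXZ' d1 d1' d2 d2' f g h).
  reflexivity.
Qed.

Lemma arr_addh_comm (X Y X' Y' : Ob P)
  (d : disj P X Y) (d' : disj P X' Y') (r : disj P Y X) (r' : disj P Y' X')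
  (f : Hom P X X') (g : Hom P Y Y') : arr (addh d d' f g) = arr (addh r r' g f).
Proof.
  destruct HP as (_ & _ & _ & _ & _ & _ & _ & _ & _ & _ & _ & _ & comm & comm_hom & _).
  rewrite <- (arr_cast (comm X Y d) (comm X' Y' d')), (comm_hom _ _ _ _ d d' r r').
  reflexivity.
Qed.

End ParsummableLaws.

Section Fstar.
Variables (C D : PCat) (F : Functor C D) (HS : preserves_sums F).
Local Notation Cs := (FstarC HS).

Lemma Fstar_cast_eq {X X' Y Y' : Ob Cs} (e1 : X = X') (e2 : Y = Y')
  (f : Hom Cs X Y) (g : Hom Cs X' Y') :
  @arr D (fob F X) (fob F Y) f = @arr D (fob F X') (fob F Y') g ->
  cast e1 e2 f = g.
Proof. destruct e1, e2; apply (cast_eq_of_arr (C := D) eq_refl eq_refl). Qed.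

Lemma arr_Fstar_addh {X Y X' Y' : Ob Cs} (d : disj Cs X Y) (d' : disj Cs X' Y')
  (f : Hom Cs X X') (g : Hom Cs Y Y') :
  @arr D (fob F (add X Y)) (fob F (add X' Y')) (addh d d' f g)
  = arr (addh (ps_disj F HS _ _ d) (ps_disj F HS _ _ d') f g).
Proof. apply arr_cast. Qed.

Lemma arr_fhom_addh {X Y X' Y' : Ob C} (d : disj C X Y) (d' : disj C X' Y')
  (f : Hom C X X') (g : Hom C Y Y') :
  arr (fhom F (addh d d' f g))
  = arr (addh (ps_disj F HS _ _ d) (ps_disj F HS _ _ d') (fhom F f) (fhom F g)).
Proof.
  rewrite <- (ps_addh F HS _ _ _ _ d d' f g (ps_add F HS _ _ d) (ps_add F HS _ _ d')).
  symmetry; apply arr_cast.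
Qed.

Lemma ps_disj_add_l {X Y Z : Ob C} : disj C X Y -> disj C (add X Y) Z ->
  disj D (add (fob F X) (fob F Y)) (fob F Z).
Proof. intros dXY d; rewrite <- (ps_add F HS X Y dXY); exact (ps_disj F HS _ _ d). Qed.

Lemma ps_disj_add_r {X Y Z : Ob C} : disj C Y Z -> disj C X (add Y Z) ->
  disj D (fob F X) (add (fob F Y) (fob F Z)).
Proof. intros dYZ d; rewrite <- (ps_add F HS Y Z dYZ); exact (ps_disj F HS _ _ d). Qed.

Lemma Fstar_is_category : is_category D -> is_category Cs.
Proof.
  intros (id_l & id_r & assoc); split; [|split]; intros.
  - apply id_l.
  - apply id_r.
  - apply assoc.
Qed.

Lemma Fstar_is_EM : is_functor F -> is_EM C -> is_EM Cs.
Proof.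
  intros HF (act_id & act_comp & circ_iso & circ_id & circ_comp).
  pose proof HF as (Fid & Fcomp).
  split; [|split; [|split; [|split]]].
  - exact act_id.
  - exact act_comp.
  - intros u X; apply fhom_iso, circ_iso; exact HF.
  - intros X e; apply Fstar_cast_eq; simpl.
    rewrite <- Fid, <- (circ_id X e).
    apply arr_fhom; symmetry; apply arr_cast.
  - intros u v X e; symmetry; apply Fstar_cast_eq; simpl.
    rewrite <- Fcomp, (circ_comp u v X e).
    apply arr_fhom; symmetry; apply arr_cast.
Qed.

Section SumLaws.
Hypothesis HD : is_parsummable D.

Lemma Fstar_addh_idm (X Y : Ob Cs) (d : disj Cs X Y) :
  addh d d (idm X) (idm Y) = idm (add X Y).
Proof.
  destruct HD as (_ & _ & _ & _ & addh_idm & _); simpl.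
  rewrite addh_idm; apply idm_cast.
Qed.

Lemma Fstar_addh_comp (X Y X' Y' X'' Y'' : Ob Cs)
  (d : disj Cs X Y) (d' : disj Cs X' Y') (d'' : disj Cs X'' Y'')
  (f : Hom Cs X X') (f' : Hom Cs X' X'') (g : Hom Cs Y Y') (g' : Hom Cs Y' Y'') :
  addh d d'' (comp f' f) (comp g' g) = comp (addh d' d'' f' g') (addh d d' f g).
Proof.
  destruct HD as (_ & _ & _ & _ & _ & addh_comp & _); simpl.
  rewrite (addh_comp _ _ _ _ _ _ _ (ps_disj F HS _ _ d') _).
  symmetry; apply comp_cast.
Qed.

Lemma Fstar_addh_unit_r (X X' : Ob Cs) (d : disj Cs X zero) (d' : disj Cs X' zero)
  (f : Hom Cs X X') (e1 : add X zero = X) (e2 : add X' zero = X') :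
  cast e1 e2 (addh d d' f (idm zero)) = f.
Proof.
  apply Fstar_cast_eq; rewrite arr_Fstar_addh.
  exact (arr_addh_unit_r D HD (ps_zero F HS) _ _ f).
Qed.

Lemma Fstar_addh_unit_l (X X' : Ob Cs) (d : disj Cs zero X) (d' : disj Cs zero X')
  (f : Hom Cs X X') (e1 : add zero X = X) (e2 : add zero X' = X') :
  cast e1 e2 (addh d d' (idm zero) f) = f.
Proof.
  apply Fstar_cast_eq; rewrite arr_Fstar_addh.
  exact (arr_addh_unit_l D HD (ps_zero F HS) _ _ f).
Qed.

Lemma Fstar_addh_assoc (X Y Z X' Y' Z' : Ob Cs)
  (dXY : disj Cs X Y) (dYZ : disj Cs Y Z) (dXZ : disj Cs X Z)
  (dXY' : disj Cs X' Y') (dYZ' : disj Cs Y' Z') (dXZ' : disj Cs X' Z')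
  (d1 : disj Cs (add X Y) Z) (d1' : disj Cs (add X' Y') Z')
  (d2 : disj Cs X (add Y Z)) (d2' : disj Cs X' (add Y' Z'))
  (f : Hom Cs X X') (g : Hom Cs Y Y') (h : Hom Cs Z Z')
  (e1 : add (add X Y) Z = add X (add Y Z)) (e2 : add (add X' Y') Z' = add X' (add Y' Z')) :
  cast e1 e2 (addh d1 d1' (addh dXY dXY' f g) h) = addh d2 d2' f (addh dYZ dYZ' g h).
Proof.
  apply Fstar_cast_eq; rewrite !arr_Fstar_addh.
  transitivity (arr (addh (ps_disj_add_l dXY d1) (ps_disj_add_l dXY' d1')
                          (addh (ps_disj F HS _ _ dXY) (ps_disj F HS _ _ dXY') f g) h)).
  { apply arr_addh; [apply arr_Fstar_addh | reflexivity]. }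
  rewrite (arr_addh_assoc D HD _ _ _ _ _ _ _ (ps_disj F HS _ _ dYZ) (ps_disj F HS _ _ dXZ)
             _ (ps_disj F HS _ _ dYZ') (ps_disj F HS _ _ dXZ') _ _
             (ps_disj_add_r dYZ d2) (ps_disj_add_r dYZ' d2')).
  apply arr_addh; [reflexivity | symmetry; apply arr_Fstar_addh].
Qed.

Lemma Fstar_addh_comm (X Y X' Y' : Ob Cs)
  (d : disj Cs X Y) (d' : disj Cs X' Y') (r : disj Cs Y X) (r' : disj Cs Y' X')
  (f : Hom Cs X X') (g : Hom Cs Y Y') (e1 : add X Y = add Y X) (e2 : add X' Y' = add Y' X') :
  cast e1 e2 (addh d d' f g) = addh r r' g f.
Proof.
  apply Fstar_cast_eq; rewrite !arr_Fstar_addh.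
  apply arr_addh_comm, HD.
Qed.

End SumLaws.

Lemma Fstar_circ_add : is_parsummable C ->
  forall u (X Y : Ob Cs) (d : disj Cs X Y) (du : disj Cs (act Cs u X) (act Cs u Y))
    (e : act Cs u (add X Y) = add (act Cs u X) (act Cs u Y)),
  cast eq_refl e (circ Cs u (add X Y)) = addh d du (circ Cs u X) (circ Cs u Y).
Proof.
  intros (_ & _ & _ & _ & _ & _ & _ & _ & _ & _ & _ & _ & _ & _ & act_add & circ_add).
  intros u X Y d du e; apply Fstar_cast_eq.
  rewrite arr_Fstar_addh; simpl; rewrite <- arr_fhom_addh.
  apply arr_fhom.
  rewrite <- (circ_add u X Y d du (act_add u X Y d)); symmetry; apply arr_cast.
Qed.

Lemma Fstar_parsummable :
  is_functor F -> is_parsummable C -> is_parsummable D -> is_parsummable Cs.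
Proof.
  intros HF HC HD.
  pose proof HC as (_ & emC & tameC & zero_supp & _ & _ & unit_r & unit_l & _ & _ &
                    assoc & _ & comm & _ & act_add & _).
  exact (conj (Fstar_is_category (proj1 HD)) (conj (Fstar_is_EM HF emC)
        (conj tameC (conj zero_supp
        (conj (Fstar_addh_idm HD) (conj (Fstar_addh_comp HD)
        (conj unit_r (conj unit_l (conj (Fstar_addh_unit_r HD) (conj (Fstar_addh_unit_l HD)
        (conj assoc (conj (Fstar_addh_assoc HD)
        (conj comm (conj (Fstar_addh_comm HD)
        (conj act_add (Fstar_circ_add HC)))))))))))))))).
Qed.

Lemma Ifun_pmorphism : is_functor F -> is_pmorphism (Ifun HS).
Proof.
  intro HF; split; [exact HF|].
  split; [reflexivity|]. split; [intros; apply Fstar_cast_eq; reflexivity|].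
  split; [reflexivity|]. split; [intros X Y d; exact d|]. split; [reflexivity|].
  intros X Y X' Y' d d' dI dI' f g e1 e2; apply Fstar_cast_eq.
  rewrite (proof_irrelevance _ dI d), (proof_irrelevance _ dI' d').
  etransitivity; [apply arr_fhom_addh | symmetry; apply arr_Fstar_addh].
Qed.

Section FhatInverse.
Hypothesis catD : is_category D.
Variables (G : Ob D -> Ob C) (eps : forall Y, Hom D (fob F (G Y)) Y)
  (eps_inv : forall Y, Hom D Y (fob F (G Y))).
Hypotheses (eps_inv_eps : forall Y, comp (eps_inv Y) (eps Y) = idm (fob F (G Y)))
  (eps_eps_inv : forall Y, comp (eps Y) (eps_inv Y) = idm Y).

Definition Fhat_inv : Functor D Cs :=
  @Build_Functor D Cs G (fun Y Y' h => comp (eps_inv Y') (comp h (eps Y))).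

Lemma eps_iso (Y : Ob D) : is_iso (eps Y).
Proof. exists (eps_inv Y); split; auto. Qed.

Lemma eps_cancel {Z Y : Ob D} (k : Hom D Z Y) : comp (eps Y) (comp (eps_inv Y) k) = k.
Proof. destruct catD as (id_l & _ & assoc); rewrite assoc, eps_eps_inv, id_l; reflexivity. Qed.

Lemma Fhat_inv_functor : is_functor Fhat_inv.
Proof.
  destruct catD as (id_l & _ & assoc); split; cbn.
  - intro Y; rewrite id_l; apply eps_inv_eps.
  - intros Y1 Y2 Y3 h2 h1; rewrite <- !assoc, eps_cancel; reflexivity.
Qed.

Lemma Fhat_inv_Fhat_iso : nat_iso (fcomp Fhat_inv (Fhat HS)) (id_functor Cs).
Proof.
  exists (fun X => (eps (fob F X) : Hom Cs (G (fob F X)) X)); split.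
  - intro X; apply eps_iso.
  - intros X Y h; apply eps_cancel.
Qed.

Lemma Fhat_Fhat_inv_iso : nat_iso (fcomp (Fhat HS) Fhat_inv) (id_functor D).
Proof.
  exists eps; split.
  - apply eps_iso.
  - intros X Y h; apply eps_cancel.
Qed.

End FhatInverse.

Lemma Fhat_equivalence : is_category D -> ess_surj F -> is_equivalence (Fhat HS).
Proof.
  intros catD ES.
  destruct (ess_surj_choice F ES) as (G & eps & eps_inv & eps_inv_eps & eps_eps_inv).
  split; [split; reflexivity|].
  exists (Fhat_inv G eps eps_inv); split; [|split].
  - apply Fhat_inv_functor; assumption.
  - apply Fhat_inv_Fhat_iso; assumption.
  - apply Fhat_Fhat_inv_iso; assumption.
Qed.

End Fstar.

Lemma Fhat_comp_Ifun {C D : PCat} (F : Functor C D) (HS : preserves_sums F) :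
  F = fcomp (Fhat HS) (Ifun HS).
Proof. revert HS; destruct F; reflexivity. Qed.

Theorem lemma3p10 (C D : PCat) (HC : is_parsummable C) (HD : is_parsummable D)
  (F : Functor C D) (HF : is_functor F) (HS : preserves_sums F) :
  is_parsummable (FstarC HS) /\
  is_pmorphism (Ifun HS) /\
  (ess_surj F -> is_equivalence (Fhat HS)) /\
  F = fcomp (Fhat HS) (Ifun HS).
Proof.
  split; [|split; [|split]].
  - apply Fstar_parsummable; assumption.
  - apply Ifun_pmorphism; assumption.
  - apply Fhat_equivalence, HD.
  - apply Fhat_comp_Ifun.
Qed.
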